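(* Let $A$ be a set and $W$ a set of subsets of $A$ which contains $\emptyset$ and $A$ and is closed under pairwise unions and intersections. Suppose that no $C\subseteq A\times A$ all of whose rows $\{b\mid (a,b)\in C\}$ and columns $\{b\mid (b,a)\in C\}$ $(a\in A)$ belong to $W$ has infinitely many distinct rows (equivalently, infinitely many distinct columns). Then $(A,W)$ is a Pratt comonoid.
   Context: A Pratt comonoid is a pair $(A,W)$ where $A$ is a set and $W$ is a set of subsets of $A$ such that (i) $\emptyset\in W$ and $A\in W$; (ii) whenever $C\subseteq A\times A$ is such that for every $a\in A$ both the $a$-th row $\{b\mid (a,b)\in C\}$ and the $a$-th column $\{b\mid (b,a)\in C\}$ belong to $W$, the diagonal $\{b\mid (b,b)\in C\}$ also belongs to $W$. *)

From mathcomp Require Import all_boot.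
From mathcomp Require Import boolp classical_sets cardinality.
Set Implicit Arguments. Unset Strict Implicit. Unset Printing Implicit Defensive.
Local Open Scope classical_set_scope.

Definition prow {A : Type} (C : set (A * A)) (a : A) : set A := [set b | C (a, b)].
Definition pcol {A : Type} (C : set (A * A)) (a : A) : set A := [set b | C (b, a)].
Definition pdiag {A : Type} (C : set (A * A)) : set A := [set b | C (b, b)].

Definition rows_cols_in {A : Type} (W : set (set A)) (C : set (A * A)) : Prop :=
  forall a : A, W (prow C a) /\ W (pcol C a).

Definition pratt_comonoid {A : Type} (W : set (set A)) : Prop :=
  W set0 /\ W setT /\
  (forall C : set (A * A), rows_cols_in W C -> W (pdiag C)).

(** The diagonal of [C] is the union, over the rows [R] of [C], of the sets
    [R ∩ ⋂_(c ∈ R) col c]: a point [a] lies on the diagonal iff [a] is in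
    some row [R = row b] and in the column of every [c ∈ R], in particular
    in [col a].  There are finitely many rows, and, applying the hypothesis
    to the transpose of [C], finitely many columns, so this is a finite union
    of finite intersections of members of [W]. *)
From mathcomp Require Import all_boot.
From mathcomp Require Import boolp classical_sets cardinality.
Set Implicit Arguments. Unset Strict Implicit. Unset Printing Implicit Defensive.
Local Open Scope classical_set_scope.

Section FiniteLatticeOperations.
Variables (T : Type) (W : set (set T)).
Hypotheses (W0 : W set0) (WT : W setT).
Hypothesis WU : forall X Y : set T, W X -> W Y -> W (X `|` Y).
Hypothesis WI : forall X Y : set T, W X -> W Y -> W (X `&` Y).

Lemma bigcup_finite_closed (I : choiceType) (D : set I) (F : I -> set T) :
  finite_set D -> (forall i, D i -> W (F i)) -> W (\bigcup_(i in D) F i).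
Proof.
move=> finD WF; rewrite -bigsetU_fset_set // big_seq.
by apply: big_ind => // i; rewrite in_fset_set // inE; exact: WF.
Qed.

Lemma bigcap_finite_closed (I : choiceType) (D : set I) (F : I -> set T) :
  finite_set D -> (forall i, D i -> W (F i)) -> W (\bigcap_(i in D) F i).
Proof.
move=> finD WF; rewrite -bigsetI_fset_set // big_seq.
by apply: big_ind => // i; rewrite in_fset_set // inE; exact: WF.
Qed.

End FiniteLatticeOperations.

Definition ptranspose {A : Type} (C : set (A * A)) : set (A * A) :=
  [set p | C (p.2, p.1)].

Lemma rows_cols_in_transpose {A : Type} (W : set (set A)) (C : set (A * A)) :
  rows_cols_in W C -> rows_cols_in W (ptranspose C).
Proof. by move=> WC a; split; [exact: (WC a).2 | exact: (WC a).1]. Qed.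

Lemma pdiag_bigcup_rows {A : Type} (C : set (A * A)) :
  pdiag C = \bigcup_(R in range (prow C)) (R `&` \bigcap_(K in pcol C @` R) K).
Proof.
apply/seteqP; split=> [a Caa | a [_ [b _ <-] [Cba colsa]]].
  by exists (prow C a); [exists a | split=> // _ [c Cac <-]].
by apply: (colsa (pcol C a)); exists a.
Qed.

Theorem corollary5p4 (A : Type) (W : set (set A)) :
  W set0 -> W setT ->
  (forall X Y : set A, W X -> W Y -> W (X `|` Y)) ->
  (forall X Y : set A, W X -> W Y -> W (X `&` Y)) ->
  (forall C : set (A * A), rows_cols_in W C ->
     finite_set (range (prow C))) ->
  pratt_comonoid W.
Proof.
move=> W0 WT WU WI finite_rows; split=> //; split=> // C WC.
have finite_cols : finite_set (range (pcol C)).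
  exact: finite_rows _ (rows_cols_in_transpose WC).
rewrite pdiag_bigcup_rows; apply: bigcup_finite_closed => //; first exact: finite_rows.
move=> _ [b _ <-]; apply: (WI); first exact: (WC b).1.
apply: bigcap_finite_closed => //; last by move=> _ [c _ <-]; exact: (WC c).2.
by apply: sub_finite_set finite_cols => _ [c _ <-]; exists c.
Qed.
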